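(* Let $\mathcal C$ be an $R$-coring satisfying the left $\alpha$-condition. The following are equivalent: (i) $\mathrm{Rat}^{\mathcal C}({}^*\mathcal C)$ is dense in ${}^*\mathcal C$ in the $\mathcal C$-adic topology; (ii) $\mathrm{Rat}^{\mathcal C}({}^*\mathcal C)$ is dense in ${}^*\mathcal C$ in the finite topology; (iii) $\mathrm{Rat}^{\mathcal C}$ is an exact functor.
   Context: An $R$-coring is a triple $(\mathcal C,\Delta,\varepsilon)$ with $\mathcal C$ an $R$-bimodule and $\Delta:\mathcal C\to\mathcal C\otimes_R\mathcal C$, $\varepsilon:\mathcal C\to R$ coassociative and counital $R$-bimodule maps; write $\Delta(c)=c_{(1)}\otimes_R c_{(2)}$. ${}^*\mathcal C={}_R\mathrm{Hom}(\mathcal C,R)$ is a ring with product $(f\#g)(c)=g(c_{(1)}f(c_{(2)}))$ and unit $\varepsilon$. A right $\mathcal C$-comodule is a right $R$-module $N$ with a right $R$-linear coassociative counital map $N\to N\otimes_R\mathcal C$, $n\mapsto n_{[0]}\otimes n_{[1]}$; it is a right ${}^*\mathcal C$-module via $n\cdot f=n_{[0]}f(n_{[1]})$; in particular $\mathcal C$ is a right ${}^*\mathcal C$-module via $c\cdot f=c_{(1)}f(c_{(2)})$. $\mathcal C$ satisfies the left $\alpha$-condition if it is locally projective as a left $R$-module, equivalently for every right $R$-module $N$ the map $N\otimes_R\mathcal C\to\mathrm{Hom}_R({}^*\mathcal C,N)$, $n\otimes c\mapsto(f\mapsto nf(c))$, is injective; then the category $\mathcal M^{\mathcal C}$ of right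 comodules is a full subcategory of right ${}^*\mathcal C$-modules (equal to $\sigma[\mathcal C_{{}^*\mathcal C}]$). For a right ${}^*\mathcal C$-module $M$, $\mathrm{Rat}^{\mathcal C}(M)$ is the set of $m\in M$ for which there is $\sum_i m_i\otimes c_i\in M\otimes_R\mathcal C$ with $m\cdot f=\sum_i m_if(c_i)$ for all $f\in{}^*\mathcal C$; it is the largest ${}^*\mathcal C$-submodule of $M$ that is a right $\mathcal C$-comodule inducing the given action, and $\mathrm{Rat}^{\mathcal C}$ is a left exact functor from right ${}^*\mathcal C$-modules to $\mathcal M^{\mathcal C}$. Here ${}^*\mathcal C$ is regarded as a right module over itself. The finite topology on ${}^*\mathcal C={}_R\mathrm{Hom}(\mathcal C,R)$ has basic open sets $\{g\mid g(c)=f(c)\ \forall c\in F\}$, $F\subseteq\mathcal C$ finite. The $\mathcal C$-adic topology on ${}^*\mathcal C$ is the topology induced via $f\mapsto(c\mapsto c\cdot f)$ by the finite topology on $\mathrm{End}_{\mathbb Z}(\mathcal C)$; its basic open sets are $\{g\mid c\cdot g=c\cdot f\ \forall c\in F\}$, $F\subseteq\mathcal C$ finite. *)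

From HB Require Import structures.
From mathcomp Require Import all_boot all_order all_algebra.
From Stdlib Require List.
Set Implicit Arguments. Unset Strict Implicit. Unset Printing Implicit Defensive.
Import GRing.Theory.
Local Open Scope ring_scope.

Definition additive_fun (A B : zmodType) (f : A -> B) : Prop :=
  forall x y, f (x + y) = f x + f y.

Definition right_rmod (R : pzRingType) (N : zmodType) (ra : N -> R -> N) : Prop :=
  [/\ forall n m r, ra (n + m) r = ra n r + ra m r,
      forall n r s, ra n (r + s) = ra n r + ra n s,
      forall n r s, ra (ra n r) s = ra n (r * s)
    & forall n, ra n 1 = n].

Definition left_rmod (R : pzRingType) (C : zmodType) (la : R -> C -> C) : Prop :=
  [/\ forall r c d, la r (c + d) = la r c + la r d,
      forall r s c, la (r + s) c = la r c + la s c,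
      forall r s c, la r (la s c) = la (r * s) c
    & forall c, la 1 c = c].

Definition bimod (R : pzRingType) (C : zmodType)
    (la : R -> C -> C) (ra : C -> R -> C) : Prop :=
  [/\ left_rmod la, right_rmod ra & forall r c s, la r (ra c s) = ra (la r c) s].

(* Tensor products over R.  An element of N (x)_R C is represented by  *)
(* a finite formal sum  sum_i n_i (x) c_i  (a list of pairs); two such *)
(* representatives are equal in N (x)_R C iff every R-balanced         *)
(* biadditive map out of N x C takes the same value on them (universal *)
(* property of the tensor product).                                    *)

Definition tensor_eq (R : pzRingType) (N C : zmodType)
    (ra : N -> R -> N) (la : R -> C -> C) (t t' : seq (N * C)) : Prop :=
  forall (A : zmodType) (b : N -> C -> A),
    (forall n n' c, b (n + n') c = b n c + b n' c) ->
    (forall n c c', b n (c + c') = b n c + b n c') ->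
    (forall n r c, b (ra n r) c = b n (la r c)) ->
    \sum_(p <- t) b p.1 p.2 = \sum_(p <- t') b p.1 p.2.

Definition tensor3_eq (R : pzRingType) (C : zmodType)
    (la : R -> C -> C) (ra : C -> R -> C) (t t' : seq (C * C * C)) : Prop :=
  forall (A : zmodType) (b : C -> C -> C -> A),
    (forall x x' y z, b (x + x') y z = b x y z + b x' y z) ->
    (forall x y y' z, b x (y + y') z = b x y z + b x y' z) ->
    (forall x y z z', b x y (z + z') = b x y z + b x y z') ->
    (forall x r y z, b (ra x r) y z = b x (la r y) z) ->
    (forall x y r z, b x (ra y r) z = b x y (la r z)) ->
    \sum_(p <- t) b p.1.1 p.1.2 p.2 = \sum_(p <- t') b p.1.1 p.1.2 p.2.

(* R-corings.  Delta c is a representative  c_(1) (x) c_(2)  of an     *)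
(* element of C (x)_R C.                                               *)

Definition is_coring (R : pzRingType) (C : zmodType)
    (la : R -> C -> C) (ra : C -> R -> C)
    (Delta : C -> seq (C * C)) (eps : C -> R) : Prop :=
  [/\ bimod la ra,
      [/\
      (forall c d, tensor_eq ra la (Delta (c + d)) (Delta c ++ Delta d)),
      (forall r c, tensor_eq ra la (Delta (la r c))
                     [seq (la r p.1, p.2) | p <- Delta c])
      & (forall c r, tensor_eq ra la (Delta (ra c r))
                     [seq (p.1, ra p.2 r) | p <- Delta c])],
      [/\ additive_fun eps,
          forall r c, eps (la r c) = r * eps c
        & forall c r, eps (ra c r) = eps c * r],
      (forall c, tensor3_eq la ra
         (flatten [seq [seq (p.1, p.2, q.2) | p <- Delta q.1] | q <- Delta c])
         (flatten [seq [seq (q.1, p.1, p.2) | p <- Delta q.2] | q <- Delta c]))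
    &
      (forall c, \sum_(p <- Delta c) la (eps p.1) p.2 = c /\
                 \sum_(p <- Delta c) ra p.1 (eps p.2) = c)].

Definition in_dual (R : pzRingType) (C : zmodType) (la : R -> C -> C)
    (f : C -> R) : Prop :=
  additive_fun f /\ forall r c, f (la r c) = r * f c.

Definition cdot (R : pzRingType) (C : zmodType) (ra : C -> R -> C)
    (Delta : C -> seq (C * C)) (c : C) (f : C -> R) : C :=
  \sum_(p <- Delta c) ra p.1 (f p.2).

Definition sharp (R : pzRingType) (C : zmodType) (ra : C -> R -> C)
    (Delta : C -> seq (C * C)) (f g : C -> R) : C -> R :=
  fun c => g (cdot ra Delta c f).

(* the ring map R -> *C, r |-> eps(-) r ; it induces the right
   R-module structure of any right *C-module *)
Definition iota (R : pzRingType) (C : zmodType) (eps : C -> R) (r : R) : C -> R :=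
  fun c => eps c * r.

(* Left alpha-condition: for every right R-module N the map            *)
(*   N (x)_R C -> Hom_R( *C, N),  n (x) c |-> (f |-> n f(c))           *)
(* is injective.                                                       *)

Definition left_alpha (R : pzRingType) (C : zmodType) (la : R -> C -> C) : Prop :=
  forall (N : zmodType) (rn : N -> R -> N), right_rmod rn ->
  forall t t' : seq (N * C),
    (forall f, in_dual la f ->
       \sum_(p <- t) rn p.1 (f p.2) = \sum_(p <- t') rn p.1 (f p.2)) ->
    tensor_eq rn la t t'.

(* Right *C-modules: an additive group M with an action                *)
(* act : M -> (C -> R) -> M, the axioms being required for f, g in *C. *)

Definition right_dual_mod (R : pzRingType) (C : zmodType)
    (la : R -> C -> C) (ra : C -> R -> C)
    (Delta : C -> seq (C * C)) (eps : C -> R)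
    (M : zmodType) (act : M -> (C -> R) -> M) : Prop :=
  [/\ forall m m' f, in_dual la f -> act (m + m') f = act m f + act m' f,
      forall m f g, in_dual la f -> in_dual la g ->
        act m (fun c => f c + g c) = act m f + act m g,
      forall m f g, in_dual la f -> in_dual la g ->
        act (act m f) g = act m (sharp ra Delta f g)
    & forall m, act m eps = m].

Definition dual_mod_hom (R : pzRingType) (C : zmodType) (la : R -> C -> C)
    (M1 M2 : zmodType) (act1 : M1 -> (C -> R) -> M1)
    (act2 : M2 -> (C -> R) -> M2) (u : M1 -> M2) : Prop :=
  additive_fun u /\ forall m f, in_dual la f -> u (act1 m f) = act2 (u m) f.

(* Rat^C(M): m is rational iff there is  sum_i m_i (x) c_i in M (x)_R C
   with m.f = sum_i m_i f(c_i) for all f in *C  (here m_i f(c_i) means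
   m_i . iota (f c_i), the right R-module structure of M). *)
Definition Rat_mod (R : pzRingType) (C : zmodType) (la : R -> C -> C)
    (eps : C -> R) (M : zmodType) (act : M -> (C -> R) -> M) (m : M) : Prop :=
  exists s : seq (M * C), forall f, in_dual la f ->
    act m f = \sum_(p <- s) act p.1 (iota eps (f p.2)).

(* Rat^C( *C ), *C being a right module over itself:  g.f = g # f, and
   the right R-module structure of *C is (g r)(c) = g(c) r. *)
Definition Rat_dual (R : pzRingType) (C : zmodType) (la : R -> C -> C)
    (ra : C -> R -> C) (Delta : C -> seq (C * C)) (g : C -> R) : Prop :=
  exists s : seq ((C -> R) * C),
    (forall p, Stdlib.Lists.List.In p s -> in_dual la p.1) /\
    forall f, in_dual la f -> forall c,
      sharp ra Delta g f c = \sum_(p <- s) p.1 c * f p.2.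

Definition Rat_dense_Cadic (R : pzRingType) (C : zmodType) (la : R -> C -> C)
    (ra : C -> R -> C) (Delta : C -> seq (C * C)) : Prop :=
  forall f, in_dual la f -> forall F : seq C,
    exists g, [/\ in_dual la g, Rat_dual la ra Delta g &
                  forall c, c \in F -> cdot ra Delta c g = cdot ra Delta c f].

Definition Rat_dense_finite (R : pzRingType) (C : zmodType) (la : R -> C -> C)
    (ra : C -> R -> C) (Delta : C -> seq (C * C)) : Prop :=
  forall f, in_dual la f -> forall F : seq C,
    exists g, [/\ in_dual la g, Rat_dual la ra Delta g &
                  forall c, c \in F -> g c = f c].

Definition Rat_exact (R : pzRingType) (C : zmodType) (la : R -> C -> C)
    (ra : C -> R -> C) (Delta : C -> seq (C * C)) (eps : C -> R) : Prop :=
  forall (M1 M2 M3 : zmodType) (act1 : M1 -> (C -> R) -> M1)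
         (act2 : M2 -> (C -> R) -> M2) (act3 : M3 -> (C -> R) -> M3)
         (u : M1 -> M2) (v : M2 -> M3),
    right_dual_mod la ra Delta eps act1 ->
    right_dual_mod la ra Delta eps act2 ->
    right_dual_mod la ra Delta eps act3 ->
    dual_mod_hom la act1 act2 u -> dual_mod_hom la act2 act3 v ->
    injective u -> (forall m3, exists m2, v m2 = m3) ->
    (forall m2, v m2 = 0 <-> exists m1, u m1 = m2) ->
    [/\ forall m1 m1', Rat_mod la eps act1 m1 -> Rat_mod la eps act1 m1' ->
          u m1 = u m1' -> m1 = m1',
        forall m2, Rat_mod la eps act2 m2 -> v m2 = 0 ->
          exists m1, Rat_mod la eps act1 m1 /\ u m1 = m2
      & forall m3, Rat_mod la eps act3 m3 ->
          exists m2, Rat_mod la eps act2 m2 /\ v m2 = m3].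

(* (i) <-> (ii): g(c) = eps(c.g), while c.g only depends on the values of g
   on the second tensor factors of Delta(c).
   (ii) -> (iii): Rat^C is left exact.  A rational m is fixed by any
   functional agreeing with eps on the finitely many C-components of a tensor
   representing m; taking such a functional g in Rat^C( *C ), a preimage m'
   of m yields the rational preimage m'.g.
   (iii) -> (i): for finite F the restriction g |-> (c.g)_(c in F) gives a
   short exact sequence 0 -> K -> *C -> I -> 0 of right *C-modules.  The
   alpha-condition makes C locally projective, and a finite dual basis shows
   that the image of any f is rational in I; exactness lifts it to a
   rational g with c.g = c.f for c in F. *)

From HB Require Import structures.
From mathcomp Require Import all_boot all_order all_algebra.
From mathcomp Require Import boolp functions.
Set Implicit Arguments. Unset Strict Implicit. Unset Printing Implicit Defensive.
Import GRing.Theory.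
Local Open Scope ring_scope.

Lemma InP (T : eqType) (x : T) (s : seq T) : reflect (List.In x s) (x \in s).
Proof.
elim: s => [|y s IHs] /=; first by constructor.
rewrite in_cons; apply: (iffP orP) => [[/eqP ->|xs]|[->|xs]].
- by left.
- by right; apply/IHs.
- by left.
- by right; apply/IHs.
Qed.

Lemma big_flatten_map (A : zmodType) (I J K : Type) (t : seq I) (s : I -> seq J)
    (g : I -> J -> K) (F : K -> A) :
  \sum_(x <- flatten [seq [seq g q p | p <- s q] | q <- t]) F x =
  \sum_(q <- t) \sum_(p <- s q) F (g q p).
Proof. by rewrite big_flatten big_map; apply: eq_bigr => q _; rewrite big_map. Qed.

Record zsubgroup (V : zmodType) := ZSubgroup {
  zset :> V -> Prop;
  zset0 : zset 0;
  zsetB : forall x y, zset x -> zset y -> zset (x - y) }.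

Definition zmem (V : zmodType) (S : zsubgroup V) : {pred V} := fun x => `[< S x >].

Lemma zmemP (V : zmodType) (S : zsubgroup V) x : reflect (S x) (x \in zmem S).
Proof. exact: asboolP. Qed.

Fact zmem_closed (V : zmodType) (S : zsubgroup V) : zmod_closed (zmem S).
Proof.
by split=> [|x y /zmemP Sx /zmemP Sy]; apply/zmemP; [exact: zset0 | exact: zsetB].
Qed.
HB.instance Definition _ (V : zmodType) (S : zsubgroup V) :=
  GRing.isZmodClosed.Build V (zmem S) (zmem_closed S).

Section SubgroupQuotient.
Variables (V : zmodType) (S : zsubgroup V).

Record zsub := ZSub { zval : V; _ : zval \in zmem S }.
HB.instance Definition _ := [isSub for zval].
HB.instance Definition _ := [Choice of zsub by <:].
HB.instance Definition _ := [SubChoice_isSubZmodule of zsub by <:].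

Definition zsub_of (x : V) (Sx : S x) : zsub := ZSub (introT (zmemP S x) Sx).

Lemma zsubP (x : zsub) : S (zval x).
Proof. exact/zmemP/valP. Qed.

Lemma zval_inj : injective zval.
Proof. exact: val_inj. Qed.

Lemma zvalD (x y : zsub) : zval (x + y) = zval x + zval y.
Proof. by []. Qed.

Lemma zval_sum I (r : seq I) (G : I -> zsub) :
  zval (\sum_(i <- r) G i) = \sum_(i <- r) zval (G i).
Proof. exact: (raddf_sum val). Qed.

Definition zquot := Quotient.quot (zmem S).
Definition zpi : V -> zquot := \pi%qT.

Lemma zpi_sum I (r : seq I) (G : I -> V) :
  zpi (\sum_(i <- r) G i) = \sum_(i <- r) zpi (G i).
Proof. by rewrite /zpi raddf_sum. Qed.

Lemma zpiD x y : zpi (x + y) = zpi x + zpi y.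
Proof. by rewrite /zpi raddfD. Qed.

Lemma zpi_eq0 x : zpi x = 0 <-> S x.
Proof.
have -> : 0 = zpi 0 by rewrite /zpi raddf0.
split=> [/eqP|Sx]; first by rewrite -Quotient.idealrBE subr0 => /zmemP.
by apply/eqP; rewrite -Quotient.idealrBE subr0; apply/zmemP.
Qed.
End SubgroupQuotient.
Arguments zsub_of {V} S {x} Sx.
Arguments zval {V S}.

Section AdditiveFun.
Variables (A B : zmodType) (f : A -> B).
Hypothesis f_add : additive_fun f.

Lemma additive0 : f 0 = 0.
Proof. by apply: (addrI (f 0)); rewrite -f_add !addr0. Qed.

Lemma additiveB x y : f (x - y) = f x - f y.
Proof. by apply: (addIr (f y)); rewrite -f_add !subrK. Qed.

Lemma additiveN x : f (- x) = - f x.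
Proof. by rewrite -[- x]add0r additiveB additive0 add0r. Qed.

Lemma additive_sum I (s : seq I) (G : I -> A) :
  f (\sum_(i <- s) G i) = \sum_(i <- s) f (G i).
Proof.
elim: s => [|a s IHs]; first by rewrite !big_nil additive0.
by rewrite !big_cons f_add IHs.
Qed.
End AdditiveFun.

Lemma additive_fun0 (A B : zmodType) : additive_fun (0 : A -> B).
Proof. by move=> x y; rewrite /= addr0. Qed.

Lemma additive_funB (A B : zmodType) (f g : A -> B) :
  additive_fun f -> additive_fun g -> additive_fun (f - g).
Proof.
move=> fA gA x y; change (f (x + y) - g (x + y) = (f x - g x) + (f y - g y)).
by rewrite fA gA opprD addrACA.
Qed.

Definition additive_subgroup (A B : zmodType) : zsubgroup (A -> B) :=
  @ZSubgroup _ (@additive_fun A B) (@additive_fun0 A B) (@additive_funB A B).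

Section Coring.
Variables (R : pzRingType) (C : zmodType) (la : R -> C -> C) (ra : C -> R -> C)
  (Delta : C -> seq (C * C)) (eps : C -> R).
Hypothesis coring : is_coring la ra Delta eps.

Local Notation dual := (in_dual la).
Local Notation cd := (cdot ra Delta).
Local Notation sh := (sharp ra Delta).

Let bimodule : bimod la ra. Proof. by case: coring. Qed.
Lemma laD r : additive_fun (la r). Proof. by case: bimodule => -[H *] *; apply: H. Qed.
Lemma laDl r s c : la (r + s) c = la r c + la s c. Proof. by case: bimodule => -[]. Qed.
Lemma laM r s c : la r (la s c) = la (r * s) c. Proof. by case: bimodule => -[]. Qed.
Lemma la1 c : la 1 c = c. Proof. by case: bimodule => -[]. Qed.
Lemma raD r : additive_fun (ra^~ r).
Proof. by case: bimodule => _ [H *] * ? ?; apply: H. Qed.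
Lemma raDr c : additive_fun (ra c).
Proof. by case: bimodule => _ [_ H *] * ? ?; apply: H. Qed.
Lemma raM c r s : ra (ra c r) s = ra c (r * s). Proof. by case: bimodule => _ []. Qed.
Lemma la_ra r c s : la r (ra c s) = ra (la r c) s. Proof. by case: bimodule. Qed.

Definition balanced (A : zmodType) (b : C -> C -> A) :=
  [/\ forall n n' c, b (n + n') c = b n c + b n' c,
      forall n c c', b n (c + c') = b n c + b n c'
    & forall n r c, b (ra n r) c = b n (la r c)].

Section Comultiplication.
Variables (A : zmodType) (b : C -> C -> A).
Hypothesis b_bal : balanced b.

Lemma DeltaD : additive_fun (fun c => \sum_(p <- Delta c) b p.1 p.2).
Proof.
case: b_bal => h1 h2 h3 c d; case: coring => _ [HD _ _] _ _ _.
by rewrite (HD c d A b h1 h2 h3) big_cat.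
Qed.

Lemma Delta_sum I (s : seq I) (G : I -> C) :
  \sum_(p <- Delta (\sum_(i <- s) G i)) b p.1 p.2 =
  \sum_(i <- s) \sum_(p <- Delta (G i)) b p.1 p.2.
Proof. exact: (additive_sum DeltaD). Qed.

Lemma Delta_la r c :
  \sum_(p <- Delta (la r c)) b p.1 p.2 = \sum_(p <- Delta c) b (la r p.1) p.2.
Proof.
case: b_bal => h1 h2 h3; case: coring => _ [_ HD _] _ _ _.
by rewrite (HD r c A b h1 h2 h3) big_map.
Qed.

Lemma Delta_ra c r :
  \sum_(p <- Delta (ra c r)) b p.1 p.2 = \sum_(p <- Delta c) b p.1 (ra p.2 r).
Proof.
case: b_bal => h1 h2 h3; case: coring => _ [_ _ HD] _ _ _.
by rewrite (HD c r A b h1 h2 h3) big_map.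
Qed.
End Comultiplication.

Lemma eps_add : additive_fun eps. Proof. by case: coring => _ _ []. Qed.
Lemma eps_ra c r : eps (ra c r) = eps c * r. Proof. by case: coring => _ _ []. Qed.
Lemma counitl c : \sum_(p <- Delta c) la (eps p.1) p.2 = c.
Proof. by case: coring => _ _ _ _ /(_ c) []. Qed.
Lemma counitr c : \sum_(p <- Delta c) ra p.1 (eps p.2) = c.
Proof. by case: coring => _ _ _ _ /(_ c) []. Qed.

Lemma dual_add f : dual f -> additive_fun f. Proof. by case. Qed.
Lemma dual_la f r c : dual f -> f (la r c) = r * f c. Proof. by case=> _ ->. Qed.
Lemma dual_eps : dual eps.
Proof. by split; [exact: eps_add | case: coring => _ _ []]. Qed.
Lemma dual0 : dual (0 : C -> R).
Proof. by split=> [x y|r c] /=; rewrite ?addr0 ?mulr0. Qed.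
Lemma dualD f g : dual f -> dual g -> dual (f + g).
Proof.
move=> [fA fL] [gA gL]; split=> [x y|r c].
  by change (f (x + y) + g (x + y) = (f x + g x) + (f y + g y)); rewrite fA gA addrACA.
by change (f (la r c) + g (la r c) = r * (f c + g c)); rewrite fL gL mulrDr.
Qed.
Lemma dualB f g : dual f -> dual g -> dual (f - g).
Proof.
move=> [fA fL] [gA gL]; split=> [|r c]; first exact: additive_funB.
by change (f (la r c) - g (la r c) = r * (f c - g c)); rewrite fL gL mulrBr.
Qed.
Lemma dual_sum (I : eqType) (s : seq I) (G : I -> C -> R) :
  (forall i, i \in s -> dual (G i)) -> dual (\sum_(i <- s) G i).
Proof.
elim: s => [|a s IHs] Hs; first by rewrite big_nil; exact: dual0.
rewrite big_cons; apply: dualD; first by apply: Hs; rewrite mem_head.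
by apply: IHs => i si; apply: Hs; rewrite in_cons si orbT.
Qed.
Lemma dual_mulr g r : dual g -> dual (fun c => g c * r).
Proof.
by move=> [gA gL]; split=> [x y|s c]; [rewrite gA mulrDl | rewrite gL mulrA].
Qed.
Lemma dual_iota r : dual (iota eps r).
Proof. exact: (dual_mulr r dual_eps). Qed.

Definition dual_subgroup : zsubgroup (C -> R) := ZSubgroup dual0 dualB.

Definition dual_family (L : seq ((C -> R) * C)) := forall p, p \in L -> dual p.1.

Lemma bal_cdot g : dual g -> balanced (fun x y => ra x (g y)).
Proof.
move=> gD; split=> [n n' c|n c c'|n r c]; first exact: raD.
  by rewrite (dual_add gD) raDr.
by rewrite raM (dual_la _ _ gD).
Qed.

Lemma cdotD g : dual g -> additive_fun (cd^~ g).
Proof. by move=> gD; apply: (DeltaD (bal_cdot gD)). Qed.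

Lemma cdot0 g : dual g -> cd 0 g = 0.
Proof. by move/cdotD/additive0. Qed.

Lemma cdot_la g r c : dual g -> cd (la r c) g = la r (cd c g).
Proof.
move=> gD; rewrite /cdot (Delta_la (bal_cdot gD)) (additive_sum (laD r)).
by apply: eq_bigr => p _; rewrite la_ra.
Qed.

Lemma cdotDr c : additive_fun (cd c).
Proof.
by move=> g h; rewrite /cdot -big_split; apply: eq_bigr => p _; apply: raDr.
Qed.

Lemma cdot_eps c : cd c eps = c.
Proof. exact: counitr. Qed.

Lemma cdot_iota c r : cd c (iota eps r) = ra c r.
Proof.
rewrite /cdot /iota; under eq_bigr do rewrite -raM.
by rewrite -(additive_sum (raD r)) counitr.
Qed.

Lemma eps_cdot g c : dual g -> eps (cd c g) = g c.
Proof.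
move=> gD; rewrite /cdot (additive_sum eps_add).
under eq_bigr do rewrite eps_ra.
rewrite -{2}(counitl c) (additive_sum (dual_add gD)).
by apply: eq_bigr => p _; rewrite (dual_la _ _ gD).
Qed.

Lemma sharp_iota g r : dual g -> sh g (iota eps r) = fun c => g c * r.
Proof. by move=> gD; apply: funext => c; rewrite /sharp /iota eps_cdot. Qed.

Lemma dual_sharp g f : dual g -> dual f -> dual (sh g f).
Proof.
move=> gD fD; split=> [x y|r c]; rewrite /sharp.
  by rewrite (cdotD gD) (dual_add fD).
by rewrite cdot_la // (dual_la _ _ fD).
Qed.

(* Coassociativity: C is a right *C-module, (c.g).f = c.(g # f). *)
Lemma cdot_sharp c g f : dual g -> dual f -> cd c (sh g f) = cd (cd c g) f.
Proof.
move=> gD fD.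
have coassoc : tensor3_eq la ra
    (flatten [seq [seq (p.1, p.2, q.2) | p <- Delta q.1] | q <- Delta c])
    (flatten [seq [seq (q.1, p.1, p.2) | p <- Delta q.2] | q <- Delta c]).
  by case: coring => _ _ _ H _; apply: H.
have coassoc_gf :
    \sum_(q <- Delta c) \sum_(p <- Delta q.1) ra p.1 (f (ra p.2 (g q.2))) =
    \sum_(q <- Delta c) \sum_(p <- Delta q.2) ra q.1 (f (ra p.1 (g p.2))).
  have := coassoc C (fun x y z => ra x (f (ra y (g z)))).
  rewrite !big_flatten_map /=; apply=> [x x' y z|x y y' z|x y z z'|x r y z|x y r z].
  - exact: raD.
  - by rewrite raD (dual_add fD) raDr.
  - by rewrite (dual_add gD) raDr (dual_add fD) raDr.
  - by rewrite raM -la_ra (dual_la _ _ fD).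
  - by rewrite raM (dual_la _ _ gD).
transitivity (\sum_(q <- Delta c) \sum_(p <- Delta q.2) ra q.1 (f (ra p.1 (g p.2)))).
  apply: eq_bigr => q _; rewrite /sharp /cdot.
  by rewrite (additive_sum (dual_add fD)) (additive_sum (raDr _)).
rewrite -coassoc_gf /cdot (Delta_sum (bal_cdot fD)); apply: eq_bigr => q _.
by rewrite (Delta_ra (bal_cdot fD)).
Qed.

(* (i) -> (ii): g(c) = eps(c.g), so agreeing C-adically on F implies
   agreeing pointwise on F. *)
Lemma dense_Cadic_finite : Rat_dense_Cadic la ra Delta -> Rat_dense_finite la ra Delta.
Proof.
move=> dense f fD F; have [g [gD gR Hg]] := dense f fD F.
by exists g; split=> // c cF; rewrite -(eps_cdot c gD) Hg // eps_cdot.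
Qed.

(* The second tensor factors of Delta(c), for all c in F: c.g only depends on
   the values of g there. *)
Definition factors (F : seq C) : seq C :=
  flatten [seq [seq p.2 | p <- Delta c] | c <- F].

Lemma mem_factors F c p : c \in F -> p \in Delta c -> p.2 \in factors F.
Proof.
move=> cF pD; apply/flattenP; exists [seq q.2 | q <- Delta c]; last exact: map_f.
exact: (map_f (fun c => [seq q.2 | q <- Delta c])).
Qed.

Lemma dense_finite_Cadic : Rat_dense_finite la ra Delta -> Rat_dense_Cadic la ra Delta.
Proof.
move=> dense f fD F; have [g [gD gR Hg]] := dense f fD (factors F).
exists g; split=> // c cF; rewrite /cdot; apply: eq_big_seq => p pD.
by rewrite Hg // (mem_factors cF).
Qed.

Section DualModule.
Variables (M : zmodType) (act : M -> (C -> R) -> M).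
Hypothesis Mmod : right_dual_mod la ra Delta eps act.

Lemma actDr m f g : dual f -> dual g -> act m (f + g) = act m f + act m g.
Proof. by case: Mmod => _ H _ _; apply: H. Qed.

Lemma act_sum m (I : eqType) (s : seq I) (G : I -> C -> R) :
  (forall i, i \in s -> dual (G i)) ->
  act m (\sum_(i <- s) G i) = \sum_(i <- s) act m (G i).
Proof.
elim: s => [|a s IHs] Hs.
  by rewrite !big_nil; apply: (addrI (act m 0)); rewrite -actDr ?addr0 //; exact: dual0.
have sD i : i \in s -> dual (G i) by move=> si; apply: Hs; rewrite in_cons si orbT.
rewrite !big_cons actDr ?IHs //; first by apply: Hs; rewrite mem_head.
exact: dual_sum.
Qed.

Lemma actA m f g : dual f -> dual g -> act (act m f) g = act m (sh f g).
Proof. by case: Mmod => _ _ H _; apply: H. Qed.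

Lemma act_eps m : act m eps = m.
Proof. by case: Mmod. Qed.

Lemma Rat_act m g : dual g -> Rat_dual la ra Delta g -> Rat_mod la eps act (act m g).
Proof.
move=> gD [s [sD sharp_s]].
have sD' : dual_family s by move=> p /InP; apply: sD.
exists [seq (act m p.1, p.2) | p <- s] => f fD; rewrite big_map actA //.
have -> : sh g f = \sum_(p <- s) (fun c => p.1 c * f p.2).
  by apply: funext => c; rewrite fct_sumE sharp_s.
rewrite act_sum; last by move=> p /sD' pD; apply: dual_mulr.
apply: eq_big_seq => -[h c] /sD' /= hD.
by rewrite actA ?sharp_iota //; exact: dual_iota.
Qed.

Lemma Rat_fixed m (s : seq (M * C)) g :
  (forall f, dual f -> act m f = \sum_(p <- s) act p.1 (iota eps (f p.2))) ->
  dual g -> {in [seq p.2 | p <- s], g =1 eps} -> act m g = m.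
Proof.
move=> ms gD gE; rewrite ms // -[RHS]act_eps (ms eps dual_eps).
by apply: eq_big_seq => p ps; rewrite gE // map_f.
Qed.
End DualModule.

(* Under (ii), rational elements lift along *C-linear maps: if n = w m is
   rational, a rational g close enough to eps fixes n, and m.g is a rational
   preimage of n. *)
Lemma Rat_lift (M N : zmodType) (actM : M -> (C -> R) -> M) (actN : N -> (C -> R) -> N)
    (w : M -> N) m n :
  Rat_dense_finite la ra Delta ->
  right_dual_mod la ra Delta eps actM -> right_dual_mod la ra Delta eps actN ->
  (forall m f, dual f -> w (actM m f) = actN (w m) f) ->
  Rat_mod la eps actN n -> w m = n -> exists m', Rat_mod la eps actM m' /\ w m' = n.
Proof.
move=> dense Mmod Nmod wL [s sn] wmn.
have [g [gD gR gE]] := dense eps dual_eps [seq p.2 | p <- s].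
exists (actM m g); split; first exact: Rat_act.
by rewrite wL // wmn (Rat_fixed Nmod sn).
Qed.

(* (ii) -> (iii): Rat is always left exact, and right exact by lifting. *)
Lemma dense_finite_exact : Rat_dense_finite la ra Delta -> Rat_exact la ra Delta eps.
Proof.
move=> dense M1 M2 M3 act1 act2 act3 u v M1mod M2mod M3mod [_ uL] [_ vL] uI vS uv.
split.
- by move=> m1 m1' _ _; apply: uI.
- by move=> m2 m2R /uv [m1 um1]; apply: (Rat_lift dense M1mod M2mod uL m2R um1).
- move=> m3 m3R; have [m2 vm2] := vS m3.
  exact: (Rat_lift dense M2mod M3mod vL m3R vm2).
Qed.

Lemma dual_family_cat L L' : dual_family L -> dual_family L' -> dual_family (L ++ L').
Proof. by move=> LD L'D p; rewrite mem_cat => /orP[/LD|/L'D]. Qed.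

Section LocalProjectivity.
Variable D : seq C.

Definition dual_sum_on (x : C -> C) : Prop :=
  exists2 L, dual_family L &
    forall y, y \in D -> x y = \sum_(p <- L) la (p.1 y) p.2.

Lemma dual_sum_on0 : dual_sum_on 0.
Proof. by exists [::] => // y _; rewrite big_nil. Qed.

Lemma dual_sum_onB x x' : dual_sum_on x -> dual_sum_on x' -> dual_sum_on (x - x').
Proof.
move=> [L LD xL] [L' L'D x'L']; exists (L ++ [seq (p.1, - p.2) | p <- L']).
  by apply: dual_family_cat => // q /mapP[p pL' ->]; exact: (L'D p).
move=> y yD; rewrite big_cat big_map.
change (x y - x' y =
  \sum_(p <- L) la (p.1 y) p.2 + \sum_(p <- L') la (p.1 y) (- p.2)).
rewrite xL // x'L' // -sumrN.
by congr (_ + _); apply: eq_bigr => p _; rewrite (additiveN (laD _)).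
Qed.

Let SD := ZSubgroup dual_sum_on0 dual_sum_onB.
Let A := zquot SD.

(* N = Hom_Z(C, C^C / SD), a right R-module through (n.r)(c) = n(r c). *)
Let N := zsub (additive_subgroup C A).

Lemma rn_additive (n : N) r : additive_fun (fun c => zval n (la r c)).
Proof. by move=> c d; rewrite laD (zsubP n). Qed.

Definition rn (n : N) r : N := zsub_of (additive_subgroup C A) (rn_additive n r).

Lemma rn_mod : right_rmod rn.
Proof.
split=> [n n' r|n r s|n r s|n]; apply: zval_inj; apply: funext => c //=.
- by rewrite laDl (zsubP n).
- by rewrite laM.
- by rewrite la1.
Qed.

Definition unit_at (d c : C) : C -> C := fun y => if y == d then c else 0.

Lemma sum_unit_at (G : C -> C) y : y \in D ->
  (\sum_(d <- undup D) unit_at d (G d)) y = G y.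
Proof.
move=> yD; rewrite fct_sumE (bigD1_seq y) ?mem_undup ?undup_uniq //=.
rewrite /unit_at eqxx big1 ?addr0 // => d /negbTE dy.
by rewrite eq_sym dy.
Qed.

Lemma unit_at_additive d : additive_fun (fun c => zpi SD (unit_at d c)).
Proof.
move=> c c'; rewrite -zpiD; congr zpi; apply: funext => y.
change ((if y == d then c + c' else 0) =
        (if y == d then c else 0) + (if y == d then c' else 0)).
by case: (y == d); rewrite ?addr0.
Qed.

Definition unit_hom d : N := zsub_of (additive_subgroup C A) (unit_at_additive d).

Lemma local_dual_basis : left_alpha la ->
  exists2 L, dual_family L & forall d, d \in D -> d = \sum_(p <- L) la (p.1 d) p.2.
Proof.
move=> alpha.
(* t = sum_d [unit_at d -] (x) d is killed by the alpha-map, as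
   f |-> (c |-> [(f(d) c)_d]) lands in SD; hence t = 0 in N (x)_R C. *)
pose t := [seq (unit_hom d, d) | d <- undup D].
have t0 : tensor_eq rn la t [::].
  apply: alpha; first exact: rn_mod.
  move=> f fD; rewrite big_nil big_map; apply: zval_inj; rewrite zval_sum.
  apply: funext => c; rewrite fct_sumE /= -zpi_sum; apply/zpi_eq0.
  exists [:: (f, c)] => [p|y yD]; first by rewrite inE => /eqP ->.
  by rewrite big_seq1 (sum_unit_at (fun d => la (f d) c)).
(* Evaluating n (x) c |-> n(c) on t gives [(d)_d] = 0, i.e. (d)_d in SD. *)
have := t0 A (fun n c => zval n c) (fun n n' c => erefl)
  (fun n c c' => zsubP n c c') (fun n r c => erefl).
rewrite big_nil big_map /= -zpi_sum => /zpi_eq0 [L LD HL].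
by exists L => // d dD; rewrite -HL // (sum_unit_at id).
Qed.
End LocalProjectivity.

Lemma cdot_dual_basis L y h : dual_family L -> dual h ->
  (forall q, q \in Delta y -> q.2 = \sum_(p <- L) la (p.1 q.2) p.2) ->
  cd y h = \sum_(p <- L) ra (cd y p.1) (h p.2).
Proof.
move=> LD hD yL.
transitivity (\sum_(q <- Delta y) \sum_(p <- L) ra (ra q.1 (p.1 q.2)) (h p.2)).
  rewrite /cdot; apply: eq_big_seq => q qy; rewrite {1}(yL q qy).
  rewrite (additive_sum (dual_add hD)) (additive_sum (raDr _)).
  by apply: eq_bigr => p _; rewrite (dual_la _ _ hD) raM.
rewrite exchange_big; apply: eq_bigr => p _.
by rewrite /cdot (additive_sum (raD _)).
Qed.

Lemma cdot_local_basis (Y : seq C) : left_alpha la ->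
  exists2 L, dual_family L & forall y h, y \in Y -> dual h ->
    cd y h = \sum_(p <- L) ra (cd y p.1) (h p.2).
Proof.
move=> alpha; have [L LD LY] := local_dual_basis (factors Y) alpha.
exists L => // y h yY hD; apply: cdot_dual_basis => // q qy.
exact/LY/(mem_factors yY qy).
Qed.

Section SubModule.
Variables (V : zmodType) (act : V -> (C -> R) -> V) (S : zsubgroup V).
Hypothesis S_act : forall m f, S m -> dual f -> S (act m f).
Hypothesis S_actDl : forall m m' f, S m -> S m' -> dual f ->
  act (m + m') f = act m f + act m' f.
Hypothesis S_actDr : forall m f g, S m -> dual f -> dual g ->
  act m (f + g) = act m f + act m g.
Hypothesis S_actA : forall m f g, S m -> dual f -> dual g ->
  act (act m f) g = act m (sh f g).
Hypothesis S_act_eps : forall m, S m -> act m eps = m.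

Definition subact (m : zsub S) (f : C -> R) : zsub S :=
  if pselect (dual f) is left fD then zsub_of S (S_act (zsubP m) fD) else m.

Lemma subactE m f : dual f -> zval (subact m f) = act (zval m) f.
Proof. by move=> fD; rewrite /subact; case: pselect. Qed.

Lemma subact_mod : right_dual_mod la ra Delta eps subact.
Proof.
have Sm := @zsubP _ S.
split=> [m m' f fD|m f g fD gD|m f g fD gD|m]; apply: zval_inj.
- by rewrite zvalD !subactE // zvalD S_actDl.
- by rewrite zvalD !subactE ?S_actDr //; exact: dualD.
- have mfS := S_act (Sm m) fD.
  by rewrite !subactE ?S_actA //; exact: dual_sharp.
- by rewrite subactE ?S_act_eps //; exact: dual_eps.
Qed.
End SubModule.

Section RightIdeal.
Variable S : zsubgroup (C -> R).
Hypothesis S_dual : forall g, S g -> dual g.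
Hypothesis S_sharp : forall g f, S g -> dual f -> S (sh g f).

Lemma ideal_mod : right_dual_mod la ra Delta eps (subact S_sharp).
Proof.
apply: subact_mod => [g g' f _ _ fD|g f f' _ _ _|g f f' /S_dual gD fD _|g /S_dual gD].
- by apply: funext => c; rewrite /sharp cdotDr (dual_add fD).
- by [].
- by apply: funext => c; rewrite /sharp cdot_sharp.
- by apply: funext => c; rewrite /sharp eps_cdot.
Qed.
End RightIdeal.

Definition dual_act := subact (S:=dual_subgroup) dual_sharp.

Lemma dual_mod : right_dual_mod la ra Delta eps dual_act.
Proof. exact: ideal_mod. Qed.

Lemma Rat_mod_dual g : Rat_mod la eps dual_act g -> Rat_dual la ra Delta (zval g).
Proof.
move=> [s gs]; exists [seq (zval p.1, p.2) | p <- s]; split.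
  by move=> _ /InP/mapP[p _ ->]; exact: (zsubP p.1).
move=> f fD c; rewrite big_map.
have := congr1 (fun m => zval m c) (gs f fD); rewrite /= zval_sum fct_sumE subactE //.
move=> ->; apply: eq_bigr => p _; rewrite subactE; last exact: dual_iota.
by rewrite sharp_iota //; exact: (zsubP p.1).
Qed.

Definition pact (X : Type) (x : X -> C) (h : C -> R) : X -> C := fun i => cd (x i) h.

Section PointwiseModule.
Variables (X : Type) (S : zsubgroup (X -> C)).
Hypothesis S_pact : forall x h, S x -> dual h -> S (pact x h).

Lemma pointwise_mod : right_dual_mod la ra Delta eps (subact S_pact).
Proof.
apply: subact_mod => [x x' h _ _ hD|x f g _ _ _|x f g _ fD gD|x _];
  apply: funext => i; rewrite /pact.
- exact: (cdotD hD).
- exact: cdotDr.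
- by rewrite cdot_sharp.
- exact: cdot_eps.
Qed.
End PointwiseModule.

(* (iii) -> (i).  For finite F, restriction g |-> (c.g)_{c in F} gives an exact
   sequence of right *C-modules 0 -> K -> *C -> I -> 0. *)
Section ExactDense.
Variable F : seq C.

Definition restrict (g : C -> R) : C -> C := fun c => if c \in F then cd c g else 0.

Lemma restrict_additive : additive_fun restrict.
Proof.
move=> g g'; apply: funext => c; rewrite /restrict.
change ((if c \in F then cd c (g + g') else 0) =
        (if c \in F then cd c g else 0) + (if c \in F then cd c g' else 0)).
by case: (c \in F); rewrite ?addr0 // cdotDr.
Qed.

Lemma restrict_sharp g h : dual g -> dual h -> restrict (sh g h) = pact (restrict g) h.
Proof.
move=> gD hD; apply: funext => c; rewrite /restrict /pact.
by case: (c \in F); rewrite ?cdot_sharp ?cdot0.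
Qed.

Definition restrict_ker (g : C -> R) : Prop := dual g /\ restrict g = 0.
Definition restrict_img (x : C -> C) : Prop := exists2 g, dual g & x = restrict g.

Lemma restrict0 : restrict 0 = 0.
Proof. exact: additive0 restrict_additive. Qed.

Lemma restrict_ker0 : restrict_ker 0.
Proof. by split; [exact: dual0 | exact: restrict0]. Qed.

Lemma restrict_kerB g g' : restrict_ker g -> restrict_ker g' -> restrict_ker (g - g').
Proof.
move=> [gD g0] [g'D g'0]; split; first exact: dualB.
by rewrite (additiveB restrict_additive) g0 g'0 subr0.
Qed.

Lemma restrict_img0 : restrict_img 0.
Proof. by exists 0; [exact: dual0 | rewrite restrict0]. Qed.

Lemma restrict_imgB x x' : restrict_img x -> restrict_img x' -> restrict_img (x - x').
Proof.
move=> [g gD ->] [g' g'D ->]; exists (g - g'); first exact: dualB.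
by rewrite (additiveB restrict_additive).
Qed.

Let K := ZSubgroup restrict_ker0 restrict_kerB.
Let I := ZSubgroup restrict_img0 restrict_imgB.

Lemma restrict_ker_sharp g h : K g -> dual h -> K (sh g h).
Proof.
move=> [gD g0] hD; split; first exact: dual_sharp.
by rewrite restrict_sharp // g0; apply: funext => c; rewrite /pact cdot0.
Qed.

Lemma restrict_img_pact x h : I x -> dual h -> I (pact x h).
Proof.
move=> [g gD ->] hD; exists (sh g h); [exact: dual_sharp | by rewrite restrict_sharp].
Qed.

Let ker_act := subact restrict_ker_sharp.
Let img_act := subact restrict_img_pact.

Definition ker_incl (g : zsub K) : zsub dual_subgroup :=
  zsub_of dual_subgroup (proj1 (zsubP g)).
Definition restrict_map (g : zsub dual_subgroup) : zsub I :=
  zsub_of I (ex_intro2 _ _ (zval g) (zsubP g) erefl : restrict_img (restrict (zval g))).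

Lemma restrict_exact :
  [/\ dual_mod_hom la ker_act dual_act ker_incl,
      dual_mod_hom la dual_act img_act restrict_map, injective ker_incl,
      forall m3, exists m2, restrict_map m2 = m3
    & forall m2, restrict_map m2 = 0 <-> exists m1, ker_incl m1 = m2].
Proof.
split.
- by split=> [g g'|g h hD]; apply: zval_inj; rewrite // /= !subactE.
- split=> [g g'|g h hD]; apply: zval_inj => /=.
    exact: restrict_additive.
  by rewrite !subactE // restrict_sharp //; exact: (zsubP g).
- by move=> g g' /(congr1 zval) gg'; apply: zval_inj.
- move=> x; have [g gD gx] := zsubP x.
  by exists (zsub_of dual_subgroup gD); apply: zval_inj.
- move=> g; split=> [/(congr1 zval) g0|[k <-]].
    by exists (zsub_of K (conj (zsubP g) g0 : restrict_ker (zval g))); apply: zval_inj.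
  by apply: zval_inj; have [] := zsubP k.
Qed.

(* The image of f in I is rational: a dual basis for the tensor factors of
   the c.f exhibits it. *)
Lemma restrict_map_Rat f (fD : dual f) : left_alpha la ->
  Rat_mod la eps img_act (restrict_map (zsub_of dual_subgroup fD)).
Proof.
move=> alpha; set m := restrict_map _.
have [L LD LY] := cdot_local_basis (0 :: [seq cd c f | c <- F]) alpha.
exists [seq (img_act m p.1, p.2) | p <- L] => h hD; rewrite big_map.
apply: zval_inj; rewrite zval_sum subactE //; apply: funext => c.
rewrite fct_sumE /pact LY //; last first.
  rewrite /m /= /restrict inE; case: ifP => cF; rewrite ?eqxx //.
  by rewrite (map_f (fun c => cd c f)) ?orbT.
apply: eq_big_seq => p /LD pD; have iD := dual_iota (h p.2).
by rewrite !subactE // /pact cdot_iota.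
Qed.

(* Exactness lifts the rational image of f to a rational g with
   restrict g = restrict f. *)
Lemma exact_approx : left_alpha la -> Rat_exact la ra Delta eps ->
  forall f, dual f -> exists g, [/\ dual g, Rat_dual la ra Delta g &
    forall c, c \in F -> cd c g = cd c f].
Proof.
move=> alpha Rat_ex f fD.
have [uL vL uI vS uv] := restrict_exact.
have ker_mod := @ideal_mod K (fun g gK => proj1 gK) restrict_ker_sharp.
have [_ _ lift] := Rat_ex _ _ _ _ _ _ _ _ ker_mod dual_mod
  (pointwise_mod restrict_img_pact) uL vL uI vS uv.
have [g [gR gf]] := lift _ (restrict_map_Rat fD alpha).
exists (zval g); split; [exact: (zsubP g) | exact: Rat_mod_dual | move=> c cF].
by have := congr1 (fun x => zval x c) gf; rewrite /= /restrict cF.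
Qed.
End ExactDense.

Lemma exact_dense_Cadic : left_alpha la -> Rat_exact la ra Delta eps ->
  Rat_dense_Cadic la ra Delta.
Proof. by move=> alpha Rat_ex f fD F; apply: exact_approx. Qed.
End Coring.

Theorem proposition2p3 (R : pzRingType) (C : zmodType)
    (la : R -> C -> C) (ra : C -> R -> C)
    (Delta : C -> seq (C * C)) (eps : C -> R)
    (Hcoring : is_coring la ra Delta eps)
    (Halpha : left_alpha la) :
  (Rat_dense_Cadic la ra Delta <-> Rat_dense_finite la ra Delta) /\
  (Rat_dense_finite la ra Delta <-> Rat_exact la ra Delta eps).
Proof.
split; split.
- exact: (dense_Cadic_finite Hcoring).
- exact: dense_finite_Cadic.
- exact: (dense_finite_exact Hcoring).
- by move=> /(exact_dense_Cadic Hcoring Halpha) /(dense_Cadic_finite Hcoring).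
Qed.
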